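(* (1) $\mathsf{SCR}\subsetneq\mathsf{RAT}$ (every subsequence-closed relation is rational, and some rational relation is not subsequence-closed). (2) $\mathsf{SCR}\not\subseteq\mathsf{REG}$ and $\mathsf{REG}\not\subseteq\mathsf{SCR}$.
   Context: Over finite alphabets $\Sigma,\Gamma$: $u\sqsubseteq u'$ means $u$ is obtained from $u'$ by deleting some (possibly no) letters. $\mathsf{RAT}$ is the class of binary rational relations (accepted by 2-tape asynchronous finite automata, equivalently denoted by regular expressions over pairs in $(\Sigma\cup\{\varepsilon\})\times(\Gamma\cup\{\varepsilon\})$ with union, componentwise concatenation and star). $\mathsf{REG}$ is the class of binary regular relations: those $R$ for which some NFA over $\Sigma_\bot\times\Gamma_\bot$ accepts exactly $\{w_1\otimes w_2:(w_1,w_2)\in R\}$, where $w_1\otimes w_2$ is the letterwise pairing padded with a fresh symbol $\bot$ to length $\max(|w_1|,|w_2|)$. For $R\subseteq\Sigma^*\times\Gamma^*$, $R_{\sqsubseteq}=\{(u,w):u\sqsubseteq u'\text{ and }(u',w)\in R\text{ for some }u'\}$. The class of subsequence-closed relations is $\mathsf{SCR}=\{R_{\sqsubseteq}:R\in\mathsf{RAT}\}$. *)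

From mathcomp Require Import all_boot.
Set Implicit Arguments.
Unset Strict Implicit.
Unset Printing Implicit Defensive.

Definition brel (S G : Type) := seq S -> seq G -> Prop.

(* Regular expressions over pairs in (S u {eps}) x (G u {eps}):
   None stands for the empty word eps. *)
Inductive rexp (S G : Type) : Type :=
| RE_empty : rexp S G
| RE_atom : option S -> option G -> rexp S G
| RE_union : rexp S G -> rexp S G -> rexp S G
| RE_cat : rexp S G -> rexp S G -> rexp S G
| RE_star : rexp S G -> rexp S G.

Definition ow (T : Type) (o : option T) : seq T :=
  if o is Some x then [:: x] else [::].

Inductive rlang (S G : Type) : rexp S G -> seq S -> seq G -> Prop :=
| RL_atom a b : rlang (RE_atom a b) (ow a) (ow b)
| RL_unionl e f u w : rlang e u w -> rlang (RE_union e f) u w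
| RL_unionr e f u w : rlang f u w -> rlang (RE_union e f) u w
| RL_cat e f u1 w1 u2 w2 : rlang e u1 w1 -> rlang f u2 w2 ->
    rlang (RE_cat e f) (u1 ++ u2) (w1 ++ w2)
| RL_star_nil e : rlang (RE_star e) [::] [::]
| RL_star_cons e u1 w1 u2 w2 : rlang e u1 w1 -> rlang (RE_star e) u2 w2 ->
    rlang (RE_star e) (u1 ++ u2) (w1 ++ w2).

Definition RAT (S G : Type) (R : brel S G) : Prop :=
  exists e : rexp S G, forall u w, R u w <-> rlang e u w.

Record nfa (A : Type) := NFA {
  nfa_state : finType;
  nfa_init : pred nfa_state;
  nfa_fin : pred nfa_state;
  nfa_trans : nfa_state -> A -> nfa_state -> bool }.

Fixpoint nfa_accept_from (A : Type) (M : nfa A) (s : nfa_state M) (x : seq A)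
  : Prop :=
  match x with
  | [::] => @nfa_fin A M s
  | a :: x' => exists s', @nfa_trans A M s a s' /\ @nfa_accept_from A M s' x'
  end.

Definition nfa_accept (A : Type) (M : nfa A) (x : seq A) : Prop :=
  exists s, @nfa_init A M s /\ @nfa_accept_from A M s x.

(* Padded convolution w1 (x) w2 over Sigma_bot x Gamma_bot, with None = bot. *)
Definition conv (S G : Type) (w1 : seq S) (w2 : seq G)
  : seq (option S * option G) :=
  mkseq (fun i => (nth None (map Some w1) i, nth None (map Some w2) i))
        (maxn (size w1) (size w2)).

Definition REG (S G : finType) (R : brel S G) : Prop :=
  exists M : nfa (option S * option G),
    forall x, nfa_accept M x <-> exists w1 w2, R w1 w2 /\ x = conv w1 w2.

Definition sclose (S G : finType) (R : brel S G) : brel S G :=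
  fun u w => exists u', subseq u u' /\ R u' w.

Definition SCR (S G : finType) (R : brel S G) : Prop :=
  exists R' : brel S G, RAT R' /\ forall u w, R u w <-> sclose R' u w.

From mathcomp Require Import all_boot zify.
Set Implicit Arguments.
Unset Strict Implicit.
Unset Printing Implicit Defensive.

(* Proof outline.
   (1) SCR is included in RAT: given a regular expression e for R, the
   expression [del e], obtained by allowing every input atom (a, b) to be
   replaced by (eps, b), denotes exactly the subsequence closure of R.
   Every SCR relation relating u to w also relates the empty word to w.
   Hence the singleton {([a], eps)} is rational and synchronous-regular but
   not subsequence-closed; this gives the strictness in (1) and REG ⊄ SCR.
   (2) SCR ⊄ REG: the closure of {(a^2n, b^n) : n} is in SCR, but a fooling
   set argument (pigeonhole on the sets of reachable states of an NFA)
   shows its padded convolutions (a,b)^j (a,⊥)^j cannot be separated from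
   the rejected words (a,b)^i (a,⊥)^j with i < j by any NFA. *)

Section RationalExpressions.
Variables S G : Type.

Lemma rlang_atomE a b u w :
  @rlang S G (RE_atom a b) u w -> u = ow a /\ w = ow b.
Proof. by move=> H; inversion H. Qed.

Lemma rlang_unionE (e f : rexp S G) u w :
  rlang (RE_union e f) u w -> rlang e u w \/ rlang f u w.
Proof. by move=> H; inversion H; [left | right]. Qed.

Lemma rlang_catE (e f : rexp S G) u w : rlang (RE_cat e f) u w ->
  exists u1 w1 u2 w2,
    [/\ u = u1 ++ u2, w = w1 ++ w2, rlang e u1 w1 & rlang f u2 w2].
Proof. by move=> H; inversion H; exists u1, w1, u2, w2. Qed.

Lemma rlang_star_ind (e : rexp S G) (P : seq S -> seq G -> Prop) :
  P [::] [::] ->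
  (forall u1 w1 u2 w2, rlang e u1 w1 -> P u2 w2 -> P (u1 ++ u2) (w1 ++ w2)) ->
  forall u w, rlang (RE_star e) u w -> P u w.
Proof.
move=> Pnil Pcons u w H.
move Ef: (RE_star e) H => f H.
elim: H Ef => //; try discriminate.
by move=> e' u1 w1 u2 w2 H1 _ _ IH [E]; subst e'; apply: Pcons H1 (IH erefl).
Qed.

End RationalExpressions.

Lemma subseq_catP (T : eqType) (u u1 u2 : seq T) :
  subseq u (u1 ++ u2) ->
  exists v1 v2, [/\ u = v1 ++ v2, subseq v1 u1 & subseq v2 u2].
Proof.
move=> /subseqP [m Hm ->].
have Hsz : size (take (size u1) m) = size u1.
  by rewrite size_takel // Hm size_cat leq_addr.
exists (mask (take (size u1) m) u1), (mask (drop (size u1) m) u2).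
by rewrite -{1}(cat_take_drop (size u1) m) mask_cat // !mask_subseq.
Qed.

Section Deletion.
Variables (S : eqType) (G : Type).

Fixpoint del (e : rexp S G) : rexp S G :=
  match e with
  | RE_empty => RE_empty _ _
  | RE_atom (Some a) b => RE_union (RE_atom (Some a) b) (RE_atom None b)
  | RE_atom None b => RE_atom None b
  | RE_union e f => RE_union (del e) (del f)
  | RE_cat e f => RE_cat (del e) (del f)
  | RE_star e => RE_star (del e)
  end.

Lemma del_complete (e : rexp S G) u' w :
  rlang e u' w -> forall u, subseq u u' -> rlang (del e) u w.
Proof.
elim=> {e u' w} [[x|] b u|e f u w _ IH u0 Hs|e f u w _ IH u0 Hs|
                 e f u1 w1 u2 w2 _ IH1 _ IH2 u Hs|e u|
                 e u1 w1 u2 w2 _ IH1 _ IH2 u Hs] /=.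
- case: u => [|y [|z u]] Hs; last by move: Hs; case: (y =P x).
  + exact/RL_unionr/(RL_atom None).
  + have -> : y = x by move: Hs; case: (y =P x).
    exact/RL_unionl/(RL_atom (Some x)).
- by move=> /eqP ->; apply: (RL_atom None).
- exact/RL_unionl/IH.
- exact/RL_unionr/IH.
- have [v1 [v2 [-> H1 H2]]] := subseq_catP Hs.
  exact: RL_cat (IH1 _ H1) (IH2 _ H2).
- by move=> /eqP ->; apply: RL_star_nil.
- have [v1 [v2 [-> H1 H2]]] := subseq_catP Hs.
  exact: RL_star_cons (IH1 _ H1) (IH2 _ H2).
Qed.

Lemma del_sound (e : rexp S G) u w :
  rlang (del e) u w -> exists u', subseq u u' /\ rlang e u' w.
Proof.
elim: e u w => [|[x|] b|e IHe f IHf|e IHe f IHf|e IHe] u w /=.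
- by move=> H; inversion H.
- case/rlang_unionE => /rlang_atomE [-> ->].
  + by exists [:: x]; split; [exact: subseq_refl | apply: (RL_atom (Some x))].
  + by exists [:: x]; split; [exact: sub0seq | apply: (RL_atom (Some x))].
- by move=> Hw; exists u; split; [exact: subseq_refl|].
- case/rlang_unionE => [/IHe | /IHf] [u' [Hs Hr]]; exists u'; split => //.
  + exact: RL_unionl.
  + exact: RL_unionr.
- move=> /rlang_catE [u1 [w1 [u2 [w2 [-> -> /IHe [v1 [H1 R1]] /IHf [v2 [H2 R2]]]]]]].
  by exists (v1 ++ v2); split; [exact: cat_subseq | exact: RL_cat].
- elim/rlang_star_ind => [|u1 w1 u2 w2 /IHe [v1 [H1 R1]] [v2 [H2 R2]]].
  + by exists [::]; split => //; apply: RL_star_nil.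
  + by exists (v1 ++ v2); split; [exact: cat_subseq | exact: RL_star_cons].
Qed.

End Deletion.

Lemma SCR_RAT (S G : finType) (R : brel S G) : SCR R -> RAT R.
Proof.
move=> [R' [[e He] HR]]; exists (del e) => u w; split.
- by move=> /HR [u' [Hs /He Hr]]; apply: del_complete Hr _ Hs.
- move=> /del_sound [u' [Hs /He Hr]].
  by apply/HR; exists u'.
Qed.

Lemma SCR_nil (S G : finType) (R : brel S G) u w : SCR R -> R u w -> R [::] w.
Proof.
move=> [R' [_ HR]] /HR [u' [_ H]]; apply/HR.
by exists u'; split; [exact: sub0seq|].
Qed.

Section Singleton.
Variables (S G : finType) (a : S).

Definition single : brel S G := fun u w => u = [:: a] /\ w = [::].

Lemma single_RAT : RAT single.
Proof.
exists (RE_atom (Some a) None) => u w; split.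
- by case=> -> ->; apply: (RL_atom (Some a) None).
- by move=> /rlang_atomE [-> ->].
Qed.

(* Not subsequence-closed: ([a], eps) is related but (eps, eps) is not. *)
Lemma single_notSCR : ~ SCR single.
Proof.
by move=> Hscr; have [] := SCR_nil Hscr (conj erefl erefl : single [:: a] [::]).
Qed.

(* A two-state automaton reading exactly the letter (a, bot). *)
Definition single_nfa : nfa (option S * option G) :=
  @NFA _ bool negb id (fun s c s' => [&& ~~ s, s' & c == (Some a, None)]).

Lemma single_REG : REG single.
Proof.
exists single_nfa => x; split.
- move=> [[] [//= _ Hacc]]; case: x Hacc => [|c [|c' x]] //=.
  + by move=> [s' [/andP [_ /eqP ->] _]]; exists [:: a], [::].
  + by move=> [s' [/andP [-> _] [s'' [/and3P []]]]].
- move=> [w1 [w2 [[-> ->] ->]]].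
  by exists false; split => //; exists true; rewrite /= eqxx.
Qed.

End Singleton.

Section FoolingSet.
Variables (A : Type) (M : nfa A).

Definition reach (X : {set nfa_state M}) (p : seq A) : {set nfa_state M} :=
  foldl (fun (Y : {set nfa_state M}) c => [set s' | [exists s in Y, nfa_trans s c s']]) X p.

Lemma accept_from_cat (X : {set nfa_state M}) p q :
  (exists s, s \in X /\ nfa_accept_from s (p ++ q)) <->
  (exists t, t \in reach X p /\ nfa_accept_from t q).
Proof.
elim: p X => [|c p IH] X //=; rewrite -IH; split.
- move=> [s [Hs [s' [Ht Ha]]]]; exists s'; split => //.
  by rewrite inE; apply/existsP; exists s; rewrite Hs.
- move=> [s' [+ Ha]]; rewrite inE => /existsP [s /andP [Hs Ht]].
  by exists s; split => //; exists s'.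
Qed.

Definition init_set : {set nfa_state M} := [set s | nfa_init s].

Lemma reach_accept p p' q : reach init_set p = reach init_set p' ->
  nfa_accept M (p ++ q) -> nfa_accept M (p' ++ q).
Proof.
have accI x : nfa_accept M x <-> exists s, s \in init_set /\ nfa_accept_from s x.
  by split=> [[s [Hs Ha]]|[s [Hs Ha]]]; exists s; rewrite inE in Hs *.
by move=> E /accI /accept_from_cat; rewrite E => /accept_from_cat /accI.
Qed.

Lemma no_fooling_family (p q : nat -> seq A) :
  (forall i, nfa_accept M (p i ++ q i)) ->
  (forall i j, i < j -> ~ nfa_accept M (p i ++ q j)) -> False.
Proof.
move=> Hacc Hrej.
pose f (i : 'I_(#|{set nfa_state M}|.+1)) := reach init_set (p i).
have /injectivePn [i [j Hij E]] : ~~ injectiveb f.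
  apply/negP => /injectiveP /leq_card; by rewrite card_ord ltnn.
have fooled k l : k < l -> reach init_set (p l) = reach init_set (p k) -> False.
  by move=> Hkl E'; apply: Hrej Hkl (reach_accept E' (Hacc l)).
case: (ltngtP i j) => [Hlt|Hgt|/val_inj Eij]; last by rewrite Eij eqxx in Hij.
- exact: fooled Hlt (esym E).
- exact: fooled Hgt E.
Qed.

End FoolingSet.

Section Convolution.
Variables S G : Type.

Lemma nth_map_nseq (T : Type) n (x : T) k :
  nth None (map Some (nseq n x)) k = if k < n then Some x else None.
Proof. by elim: n k => [|n IH] [|k] //=; rewrite IH. Qed.

Lemma size_conv (w1 : seq S) (w2 : seq G) :
  size (conv w1 w2) = maxn (size w1) (size w2).
Proof. exact: size_mkseq. Qed.

Lemma nth_conv (w1 : seq S) (w2 : seq G) c k : k < maxn (size w1) (size w2) ->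
  nth c (conv w1 w2) k = (nth None (map Some w1) k, nth None (map Some w2) k).
Proof. exact: nth_mkseq. Qed.

Lemma conv_nseq (a : S) (b : G) m n : n <= m ->
  conv (nseq m a) (nseq n b) =
  nseq n (Some a, Some b) ++ nseq (m - n) (Some a, None).
Proof.
move=> Hnm; apply: (@eq_from_nth _ (None, None)).
  by rewrite size_conv size_cat !size_nseq; lia.
move=> k; rewrite size_conv !size_nseq => Hk.
rewrite nth_conv ?size_nseq // !nth_map_nseq nth_cat size_nseq !nth_nseq.
have -> : k < m by lia.
by case: (ltnP k n) => Hkn //; have -> : k - n < m - n by lia.
Qed.

End Convolution.

Section DoubleLength.
Variables (S G : finType) (a : S) (b : G).

Definition double : brel S G :=
  fun u w => exists n, u = nseq (2 * n) a /\ w = nseq n b.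

Definition double_rexp : rexp S G :=
  RE_star (RE_cat (RE_atom (Some a) None)
                  (RE_cat (RE_atom (Some a) None) (RE_atom None (Some b)))).

Lemma double_RAT : RAT double.
Proof.
exists double_rexp => u w; split.
- move=> [n [-> ->]]; elim: n => [|n IH]; first exact: RL_star_nil.
  rewrite mulnS -add2n.
  apply: (RL_star_cons _ IH (u1 := [:: a; a]) (w1 := [:: b])).
  exact: (RL_cat (RL_atom _ _) (RL_cat (RL_atom _ _) (RL_atom None (Some b)))).
- elim/rlang_star_ind => [|u1 w1 u2 w2 H [n [-> ->]]]; first by exists 0.
  have [v1 [x1 [v2 [x2 [-> -> /rlang_atomE [-> ->] H2]]]]] := rlang_catE H.
  have [v3 [x3 [v4 [x4 [-> -> /rlang_atomE [-> ->] /rlang_atomE [-> ->]]]]]] :=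
    rlang_catE H2.
  by exists n.+1; rewrite mulnS add2n.
Qed.

Definition double_closed : brel S G := sclose double.

Lemma double_closed_SCR : SCR double_closed.
Proof. by exists double; split; [exact: double_RAT|]. Qed.

(* The padded convolutions (a,b)^j (a,bot)^j are accepted, while a word
   (a,b)^i (a,bot)^j with i < j would be the convolution of some (u, b^n)
   with |u| <= 2n < i + j. *)
Lemma double_closed_notREG : ~ REG double_closed.
Proof.
move=> [M HM].
apply: (@no_fooling_family _ M (fun i => nseq i (Some a, Some b))
                               (fun j => nseq j (Some a, None))).
- move=> j; apply/HM; exists (nseq (2 * j) a), (nseq j b); split.
    by exists (nseq (2 * j) a); split; [exact: subseq_refl | exists j].
  by rewrite conv_nseq; [congr (_ ++ nseq _ _); lia | lia].
- move=> i j Hij /HM [w1 [w2 [[u' [Hs [n [Hu Hw]]]] E]]].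
  have Hw1 : size w1 <= 2 * n by rewrite -(size_nseq (2 * n) a) -Hu size_subseq.
  have Hsz := congr1 size E.
  rewrite size_cat !size_nseq size_conv Hw size_nseq in Hsz.
  have Hi := congr1 (fun x => (nth (None, None) x i).2) E.
  rewrite /= nth_cat size_nseq ltnn subnn nth_nseq ifT in Hi; last by lia.
  rewrite nth_conv Hw ?size_nseq ?nth_map_nseq in Hi; last by lia.
  by case: (ltnP i n) Hi => //= Hni _; lia.
Qed.

End DoubleLength.

Theorem mainTheorem11 (S G : finType) :
  (* (1) SCR is included in RAT ... *)
  (forall R : brel S G, SCR R -> RAT R) /\
  (* ... strictly (needs a nonempty input alphabet) *)
  (0 < #|S| -> exists R : brel S G, RAT R /\ ~ SCR R) /\
  (* (2) SCR is not included in REG *)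
  (0 < #|S| -> 0 < #|G| -> exists R : brel S G, SCR R /\ ~ REG R) /\
  (* and REG is not included in SCR *)
  (0 < #|S| -> exists R : brel S G, REG R /\ ~ SCR R).
Proof.
split; first exact: SCR_RAT.
split.
  move=> /card_gt0P [a _]; exists (@single S G a).
  by split; [exact: single_RAT | exact: single_notSCR].
split; last first.
  move=> /card_gt0P [a _]; exists (@single S G a).
  by split; [exact: single_REG | exact: single_notSCR].
move=> /card_gt0P [a _] /card_gt0P [b _]; exists (double_closed a b).
by split; [exact: double_closed_SCR | exact: double_closed_notREG].
Qed.
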